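(* Let $\kappa:=\frac12\operatorname{arccosh}(3/2)$ and for real $u>\kappa$ put \begin{equation*} \ell(u) := \frac{1}{2}(e^{4u}-e^{2u}-2-e^{-2u}+e^{-4u}) + \frac{e^{2u}-e^{-2u}}{2}\sqrt{(e^{2u}+e^{-2u}+1)(e^{2u}+e^{-2u}-3)}, \end{equation*} where $\sqrt{\cdot}$ is the nonnegative square root. If $u>\kappa$, then $\ell(u)$ is a real number with $\ell(u)>1$. *)

From Stdlib Require Import Reals.
Open Scope R_scope.

Definition arccosh (x : R) : R := ln (x + sqrt (x ^ 2 - 1)).

Definition kappa : R := / 2 * arccosh (3 / 2).

Definition ell (u : R) : R :=
  / 2 * (exp (4 * u) - exp (2 * u) - 2 - exp (- (2 * u)) + exp (- (4 * u)))
  + (exp (2 * u) - exp (- (2 * u))) / 2 *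
    sqrt ((exp (2 * u) + exp (- (2 * u)) + 1) * (exp (2 * u) + exp (- (2 * u)) - 3)).

(* With C := cosh (2 u), ell u is 2 C^2 - C - 2 plus a nonnegative square-root term, and
   2 C^2 - C - 3 = (2 C - 3) (C + 1).  Since 2 kappa = arccosh (3/2) > 0 and cosh increases on
   [0, +oo), u > kappa gives C > 3/2. *)
From Stdlib Require Import Reals Lra Psatz.
Open Scope R_scope.

Lemma arccosh_gt0 (x : R) : 1 < x -> 0 < arccosh x.
Proof.
  intros hx; unfold arccosh; rewrite <- ln_1.
  apply ln_increasing; [lra |].
  pose proof (sqrt_pos (x ^ 2 - 1)); lra.
Qed.

Lemma cosh_arccosh (x : R) : 1 <= x -> cosh (arccosh x) = x.
Proof.
  intros hx; unfold cosh, arccosh.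
  set (s := sqrt (x ^ 2 - 1)).
  assert (hs0 : 0 <= s) by apply sqrt_pos.
  assert (hs2 : s * s = x ^ 2 - 1) by (apply sqrt_sqrt; nra).
  assert (hinv : / (x + s) = x - s).
  { apply Rmult_eq_reg_l with (x + s); [rewrite Rinv_r | ]; nra. }
  rewrite exp_Ropp, exp_ln, hinv by lra.
  lra.
Qed.

Lemma cosh_lt (x y : R) : 0 <= x < y -> cosh x < cosh y.
Proof.
  intros hxy; unfold cosh; rewrite !exp_Ropp.
  set (p := exp x); set (q := exp y).
  assert (hp : 1 <= p) by (unfold p; pose proof (exp_ineq1_le x); lra).
  assert (hpq : p < q) by (unfold p, q; apply exp_increasing; lra).
  assert (hdiff : / p - / q = (q - p) * (/ p * / q)) by (field; lra).
  assert (hpq1 : / p * / q < 1).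
  { rewrite <- Rinv_mult, <- Rinv_1. apply Rinv_lt_contravar; nra. }
  nra.
Qed.

Lemma ell_cosh_sinh (u : R) :
  ell u = 2 * cosh (2 * u) ^ 2 - cosh (2 * u) - 2
          + sinh (2 * u) * sqrt ((2 * cosh (2 * u) + 1) * (2 * cosh (2 * u) - 3)).
Proof.
  unfold ell, cosh, sinh.
  set (a := exp (2 * u)); set (b := exp (- (2 * u))).
  assert (hab : a * b = 1) by (unfold a, b; rewrite <- exp_plus, <- exp_0; f_equal; ring).
  assert (h4 : exp (4 * u) = a * a) by (unfold a; rewrite <- exp_plus; f_equal; ring).
  assert (h4' : exp (- (4 * u)) = b * b) by (unfold b; rewrite <- exp_plus; f_equal; ring).
  rewrite h4, h4'.
  replace (2 * ((a + b) / 2) + 1) with (a + b + 1) by field.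
  replace (2 * ((a + b) / 2) - 3) with (a + b - 3) by field.
  lra.
Qed.

Theorem lemma4p4 (u : R) (hu : kappa < u) : 1 < ell u.
Proof.
  assert (hk : 2 * kappa = arccosh (3 / 2)) by (unfold kappa; field).
  assert (hk0 : 0 <= kappa) by (pose proof (arccosh_gt0 (3 / 2)); lra).
  assert (hC : 3 / 2 < cosh (2 * u)).
  { rewrite <- (cosh_arccosh (3 / 2)), <- hk by lra. apply cosh_lt; lra. }
  assert (hS : 0 <= sinh (2 * u)).
  { rewrite <- sinh_0. apply Rlt_le, sinh_lt. lra. }
  rewrite ell_cosh_sinh.
  pose proof (sqrt_pos ((2 * cosh (2 * u) + 1) * (2 * cosh (2 * u) - 3))).
  nra.
Qed.
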